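(* Let $p,r$ be primes and let $A$ be a noncyclic abelian $r$-group acting by automorphisms on a finite group $H$ such that the action is good. Assume that $H=VG$ where $V$ and $G$ are both $A$-invariant subgroups, $V$ is a normal $p$-subgroup of $H$ with $C_G(V)=1$, and $C_V(a)\leq C_V(g)$ for each nonidentity $a\in A$ and each $p'$-element $g\in C_G(a)$. Then either $p=r$ or $G$ is an $r'$-group.
   Context: If a group $A$ acts on a group $G$ by automorphisms, the action is called good if $H=[H,B]C_H(B)$ for every subgroup $B\le A$ and every $B$-invariant subgroup $H\le G$. *)

From mathcomp Require Import all_boot all_fingroup all_solvable.
Set Implicit Arguments. Unset Strict Implicit. Unset Printing Implicit Defensive.
Local Open Scope group_scope.

(* The action of A on H is modelled internally: A and H are subgroups of an
   ambient finite group gT with A normalizing H, and A acts by conjugation.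
   [~: K, B] is the subgroup generated by the k^-1 k^b, and 'C_K(B) is the
   fixed-point subgroup of B in K. *)
Definition good_action (gT : finGroupType) (A H : {set gT}) : Prop :=
  forall B K : {group gT}, B \subset A -> K \subset H -> B \subset 'N(K) ->
    (K :=: [~: K, B] * 'C_K(B)).

(* Suppose p <> r.  Then V is an r'-group on which the noncyclic abelian
   r-group A acts coprimely, so V is generated by the C_V(a), a in A^#.  An
   A-invariant Sylow r-subgroup R of G lies with A in a nilpotent group, where
   goodness of the action forces [R, A] = [R, A, A], i.e. [R, A] = 1.  Every
   g in R is then a p'-element of each C_G(a), so it centralizes each C_V(a),
   hence V, and R <= C_G(V) = 1.
   The generation result reduces, modulo V' and induction, to an abelian
   section on which a subgroup of A of order r^2 acts fixed-point-freely;
   there orbit sums under its cyclic subgroups show that r u = 0 for all u. *)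

From mathcomp Require Import all_boot all_fingroup all_solvable ssralg.
Set Implicit Arguments. Unset Strict Implicit. Unset Printing Implicit Defensive.
Import GRing.Theory FiniteModule.
Local Open Scope group_scope.

Section CycleOrbitSums.

Variables (gT : finGroupType) (Q : {group gT}) (abQ : abelian Q).
Implicit Type u : fmod_of abQ.

Lemma sum_actr_cycle_fixed u (e : gT) (n : nat) : e \in 'N(Q) -> e ^+ n = 1 ->
  ((\sum_(i < n) u ^@ (e ^+ i)) ^@ e = \sum_(i < n) u ^@ (e ^+ i))%R.
Proof.
move=> nQe en; rewrite actr_sum.
case: n en => [|n] en; first by rewrite !big_ord0.
rewrite big_ord_recr big_ord_recl /= -actrM ?groupX // -expgSr en expg0 addrC.
by congr (_ + _)%R; apply: eq_bigr => i _; rewrite -actrM ?groupX // -expgSr.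
Qed.

Lemma sum_actr_cycle_eq0 u (e : gT) (n : nat) :
  e \in 'N(Q) -> e ^+ n = 1 -> 'C_Q[e] = 1 -> (\sum_(i < n) u ^@ (e ^+ i) = 0)%R.
Proof.
move=> nQe en cQe1; apply: fmod_inj; rewrite fmval0.
have : fmval (\sum_(i < n) u ^@ (e ^+ i))%R \in 'C_Q[e].
  rewrite inE fmodP; apply/cent1P.
  by rewrite /commute {1}conjgC -fmvalJ // sum_actr_cycle_fixed.
by rewrite cQe1 => /set1P.
Qed.

(* Splitting each (b c^j)^i as b^i (c^i)^j regroups the orbit sums of the
   b c^j into those of the c^i, up to the n copies of u coming from i = 0. *)
Lemma fixpoint_free_pair_mulrn_eq0 u (b c : gT) (n : nat) :
    b \in 'N(Q) -> c \in 'N(Q) -> commute b c -> b ^+ n = 1 -> c ^+ n = 1 ->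
    (forall j, j < n -> 'C_Q[b * c ^+ j] = 1) ->
    (forall i, 0 < i < n -> 'C_Q[c ^+ i] = 1) ->
  (u *+ n = 0)%R.
Proof.
move=> nQb nQc cbc bn cn fpf_bc fpf_c.
have sum_bc0 : (\sum_(j < n) \sum_(i < n) u ^@ ((b * c ^+ j) ^+ i) = 0)%R.
  apply: big1 => j _; apply: sum_actr_cycle_eq0; last exact: fpf_bc.
    by rewrite groupM ?groupX.
  by rewrite expgMn; [rewrite bn -expgM mulnC expgM cn expg1n mul1g | apply: commuteX].
rewrite -{}sum_bc0 exchange_big /=.
case: n bn cn fpf_bc fpf_c => [|n] bn cn _ fpf_c; first by rewrite big_ord0.
rewrite big_ord_recl /= (eq_bigr (fun=> u)) => [|j _]; last by rewrite expg0 actr1.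
rewrite sumr_const card_ord big1 ?addr0 // => i _.
rewrite (eq_bigr (fun j : 'I_n.+1 => (u ^@ (b ^+ i.+1)) ^@ ((c ^+ i.+1) ^+ j)))%R.
  apply: sum_actr_cycle_eq0; first by rewrite groupX.
    by rewrite -expgM mulnC expgM cn expg1n.
  by apply: fpf_c; rewrite /= ltnS ltn_ord.
move=> j _; rewrite expgMn; last exact: commuteX.
by rewrite -expgM mulnC expgM actrM ?groupX.
Qed.

End CycleOrbitSums.

Lemma abelem_rank2_fixpoint_free_trivg (gT : finGroupType) (r : nat) (Q E : {group gT}) :
    prime r -> abelian Q -> r^'.-group Q -> E \subset 'N(Q) ->
    r.-abelem E -> logn r #|E| = 2 -> {in E^#, forall e, 'C_Q[e] = 1} ->
  Q :=: 1.
Proof.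
move=> pr abQ r'Q nQE abelE logE fpfE.
have [abE expE] := abelemP pr abelE.
have oE : #|E| = (r ^ 2)%N by rewrite (card_pgroup (abelem_pgroup abelE)) logE.
have [c Ec ntc] : exists2 c, c \in E & c != 1.
  by apply/trivgPn/negP=> /eqP E1; move: logE; rewrite E1 cards1 logn1.
have oc : #[c] = r := abelem_order_p abelE Ec ntc.
have [b Eb notcb] : exists2 b, b \in E & b \notin <[c]>.
  apply/subsetPn/negP=> /subset_leq_card; rewrite oE -orderE oc.
  by rewrite leqNgt -[X in X < _]expn1 ltn_exp2l ?prime_gt1.
have nQ := subsetP nQE.
have fpf_bc j : j < r -> 'C_Q[b * c ^+ j] = 1.
  move=> _; apply: fpfE; rewrite !inE groupM ?groupX // andbT.
  by apply: contra notcb => /eqP/(canRL (mulgK _)) ->; rewrite mul1g groupV mem_cycle.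
have fpf_c i : 0 < i < r -> 'C_Q[c ^+ i] = 1.
  case/andP=> i_gt0 lt_i_r; apply: fpfE; rewrite !inE groupX // andbT.
  by rewrite -order_dvdn oc gtnNdvd.
apply/trivgP/subsetP=> x Qx; rewrite inE.
have ux0 := fixpoint_free_pair_mulrn_eq0 (fmod abQ x) (nQ b Eb) (nQ c Ec)
  (centsP abE b Eb c Ec) (expE b Eb) (expE c Ec) fpf_bc fpf_c.
have coQr : coprime #|Q| r by rewrite coprime_sym (pnat_coprime (pnat_id pr)).
by rewrite -(expgK coQr Qx) -(fmodK abQ Qx) -fmvalZ ux0 fmval0 expg1n.
Qed.

Lemma coprime_noncyclic_gen_cent1 (gT : finGroupType) (r : nat) (A V : {group gT}) :
    prime r -> abelian A -> r.-group A -> ~~ cyclic A ->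
    r^'.-group V -> solvable V -> A \subset 'N(V) ->
  V \subset <<\bigcup_(a in A^#) 'C_V[a]>>.
Proof.
move=> pr abA rA ncA.
elim: {V}_.+1 {-2}V (ltnSn #|V|) => // n IHn V leVn r'V solV nVA.
set W := <<_>>.
have sWV : W \subset V by rewrite gen_subG; apply/bigcupsP=> a _; apply: subsetIl.
have nWA : A \subset 'N(W).
  apply/norms_gen/norms_bigcup/bigcapsP=> a /setD1P[_ Aa].
  rewrite normsI //; apply: subset_trans (normG _); rewrite sub_cent1.
  exact: subsetP abA a Aa.
have sV'W : V^`(1) \subset W.
  have [-> | ntV] := eqVneq V 1%G; first by rewrite derg1 commG1 sub1G.
  have ltV'V : V^`(1) \proper V := sol_der1_proper solV (subxx V) ntV.
  apply: subset_trans (IHn _ _ _ _ _) _.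
  - exact: leq_trans (proper_card ltV'V) leVn.
  - exact: pgroupS (proper_sub ltV'V) r'V.
  - exact: solvableS (proper_sub ltV'V) solV.
  - exact: char_norm_trans (der_char 1 V) nVA.
  apply: genS; apply/bigcupsP=> a Aa; apply: subset_trans (bigcup_sup a Aa).
  exact: setSI (der_sub 1 V).
have nsWV : W <| V := sub_der1_normal sV'W sWV.
have coWA : coprime #|W| #|A|.
  by rewrite coprime_sym (pnat_coprime rA (pgroupS sWV r'V)).
have tiWA : W :&: A = 1 := coprime_TIg coWA.
have : 1 < 'r_r(A / W).
  rewrite -(rank_pgroup (quotient_pgroup _ rA)) ltnNge -abelian_rank1_cyclic.
    by rewrite -(isog_cyclic (quotient_isog nWA tiWA)).
  exact: quotient_abelian.
case/p_rank_geP=> E /pnElemP[sEA abelE logE].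
rewrite -(quotient_sub1 (normal_norm nsWV)).
apply/trivgP.
apply: (abelem_rank2_fixpoint_free_trivg (Q := (V / W)%G) pr _ _ _ abelE logE).
- exact: sub_der1_abelian.
- exact: quotient_pgroup.
- exact: subset_trans sEA (quotient_norms _ nVA).
move=> x /setD1P[ntx /(subsetP sEA)/morphimP[a nWa Aa def_x]].
rewrite {x}def_x /= in ntx *.
have Aa1 : a \in A^#.
  by rewrite !inE Aa andbT; apply: contraNneq ntx => ->; rewrite morph1.
have nVa : <[a]> \subset 'N(V) by rewrite cycle_subG (subsetP nVA).
have coWa : coprime #|W| #|<[a]>| by rewrite (coprimegS _ coWA) ?cycle_subG.
rewrite -cent_cycle -quotient_cycle // -coprime_norm_quotient_cent //; last first.
- exact: solvableS sWV solV.
- by rewrite cycle_subG.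
rewrite cent_cycle; apply/trivgP.
rewrite quotient_sub1; last exact: subset_trans (subsetIl _ _) (normal_norm nsWV).
exact: sub_gen (bigcup_sup a Aa1).
Qed.

Lemma good_action_pgroup_cent (gT : finGroupType) (q : nat) (A H R : {group gT}) :
    good_action A H -> q.-group A -> q.-group R -> R \subset H -> A \subset 'N(R) ->
  R \subset 'C(A).
Proof.
move=> goodA qA qR sRH nRA; apply/commG1P/eqP; apply: contraT => ntRA.
have nilRA : nilpotent (R <*> A).
  by apply: (pgroup_nil (p := q)); rewrite /= norm_joinEr // pgroupM qR.
have sRA_RA : [~: R, A] \subset R <*> A.
  by apply: subset_trans (joing_subl R A); rewrite commg_subl.
have nRA_A : A \subset 'N_(R <*> A)([~: R, A]) by rewrite subsetI joing_subr commg_normr.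
have := nil_comm_properl nilRA sRA_RA ntRA nRA_A.
suff -> : [~: [~: R, A], A] = [~: R, A] by rewrite properxx.
have cRA_A : [~: 'C_R(A), A] = 1 by apply/commG1P; rewrite subsetIr.
rewrite {2}(goodA A R) // commMG ?cRA_A ?mulg1 //.
apply: normsR; first exact: subset_trans (subsetIl R _) (commg_norml R A).
exact: cents_norm (subsetIr R _).
Qed.

Theorem lemma4p1 (gT : finGroupType) (p r : nat) (A H V G : {group gT}) :
  prime p -> prime r ->
  abelian A -> r.-group A -> ~~ cyclic A ->
  A \subset 'N(H) -> good_action A H ->
  H :=: V * G -> A \subset 'N(V) -> A \subset 'N(G) ->
  V <| H -> p.-group V -> 'C_G(V) = 1 ->
  (forall a g, a \in A^# -> g \in 'C_G[a] -> p^'.-elt g ->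
     'C_V[a] \subset 'C_V[g]) ->
  p = r \/ r^'.-group G.
Proof.
move=> _ pr abA rA ncA _ goodA defH nVA nGA _ pV cGV1 cVa_cVg.
have [-> | npr] := eqVneq p r; [by left | right].
have r'V : r^'.-group V by apply: sub_pgroup pV => q; rewrite !inE => /eqP->.
have sVgen := coprime_noncyclic_gen_cent1 pr abA rA ncA r'V (pgroup_sol pV) nVA.
have [P sylP sAP] := Sylow_superset (joing_subr G A) rA.
have sylR : r.-Sylow(G) (G :&: P).
  by apply: Sylow_setI_normal sylP; rewrite normalYl.
have nRA : A \subset 'N(G :&: P) by rewrite normsI // (subset_trans sAP) ?normG.
have sRH : G :&: P \subset H by rewrite defH subIset ?mulG_subr.
have cRA := good_action_pgroup_cent goodA rA (pHall_pgroup sylR) sRH nRA.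
rewrite -partG_eq1 -(card_Hall sylR) -trivg_card1.
apply/eqP/trivgP; rewrite -cGV1; apply/subsetP=> g Rg.
have [Gg _] := setIP Rg.
rewrite inE Gg -sub_cent1; apply: subset_trans sVgen _.
rewrite gen_subG; apply/bigcupsP=> a Aa; apply: subset_trans (subsetIr V _).
apply: cVa_cVg => //.
  by rewrite inE Gg; apply/cent1P; apply: (centsP cRA); case/setD1P: Aa.
by apply: pi_pnat (mem_p_elt (pHall_pgroup sylR) Rg) _; rewrite !inE eq_sym.
Qed.
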